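(* Assume $k\ge 2$. Let $A:V\to V$ be an isomorphism of the model $\mathcal V$, i.e. a linear bijection with $(Ax,Ay)=(x,y)$ and $R(Ax,Ay,Az,Aw)=R(x,y,z,w)$ for all $x,y,z,w\in V$. Then there exist a permutation $\sigma$ of $\{1,\dots,k\}$ and real constants $a_0$ and $b_1,\dots,b_k$ with $|a_0|\,b_i^2=1$ for all $i$, such that for $1\le i\le k$: $AU_0=a_0U_0+\Xi_0$ with $\Xi_0\in A_V$; $AU_i=b_iU_{\sigma(i)}+\Xi_i$ with $\Xi_i\in A_{S,V}$; and $AS_i=\operatorname{sign}(a_0)S_{\sigma(i)}+\bar\Xi_i$ with $\bar\Xi_i\in A_V$.
   Context: Fix integers $k\ge1$ and signs $\varepsilon_1,\dots,\varepsilon_k\in\{\pm1\}$. Let $V=\mathbb R^{3k+2}$ with basis $\{U_0,\dots,U_k,V_0,\dots,V_k,S_1,\dots,S_k\}$, let $(\cdot,\cdot)$ be the symmetric inner product whose only nonzero values on pairs of basis vectors are $(U_i,V_i)=(V_i,U_i)=1$ for $0\le i\le k$ and $(S_i,S_i)=\varepsilon_i$ for $1\le i\le k$, and let $R$ be the algebraic curvature tensor on $V$ (a 4-linear form with $R(x,y,z,w)=-R(y,x,z,w)=R(z,w,x,y)$ and $R(x,y,z,w)+R(y,z,x,w)+R(z,x,y,w)=0$) whose only nonzero values on 4-tuples of basis vectors are those obtained from $R(U_0,U_i,U_i,S_i)=1$ ($1\le i\le k$) by these symmetries. Set $\mathcal V=(V,(\cdot,\cdot),R)$. Define $A_V=\{\xi\in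 V: R(\xi,y,z,w)=0\ \forall y,z,w\}=\ker R$ (which equals $\mathrm{Span}\{V_0,\dots,V_k\}$) and $A_{S,V}=A_V^{\perp}$ (which equals $\mathrm{Span}\{S_1,\dots,S_k,V_0,\dots,V_k\}$). *)

From HB Require Import structures.
From mathcomp Require Import all_boot all_order all_fingroup all_algebra.
Set Implicit Arguments. Unset Strict Implicit. Unset Printing Implicit Defensive.
Import Order.TTheory GRing.Theory Num.Theory.
Local Open Scope ring_scope.

(* Index set of the basis {U_0..U_k, V_0..V_k, S_1..S_k}:
   U_i  ~ inl (inl i), i : 'I_k.+1  (i = 0..k)
   V_i  ~ inl (inr i), i : 'I_k.+1  (i = 0..k)
   S_i  ~ inr j,       j : 'I_k     (S_i with i = j+1, i = 1..k)         *)
Definition idx (k : nat) : finType := ('I_k.+1 + 'I_k.+1 + 'I_k)%type.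

Definition iU k (i : 'I_k.+1) : idx k := inl (inl i).
Definition iV k (i : 'I_k.+1) : idx k := inl (inr i).
Definition iS k (j : 'I_k) : idx k := inr j.
Definition iU' k (j : 'I_k) : idx k := iU (lift ord0 j).

Notation vec R k := {ffun idx k -> R^o}.

Definition bvec (R : realFieldType) k (a : idx k) : vec R k :=
  [ffun b => (b == a)%:R].

Definition bU (R : realFieldType) k (i : 'I_k.+1) : vec R k := bvec R (iU i).
Definition bU' (R : realFieldType) k (j : 'I_k) : vec R k := bvec R (iU' j).
Definition bS (R : realFieldType) k (j : 'I_k) : vec R k := bvec R (iS j).

Definition gram (R : realFieldType) k (eps : 'I_k -> R) (a b : idx k) : R :=
  \sum_(i < k.+1) (((a, b) == (iU i, iV i))%:R + ((a, b) == (iV i, iU i))%:R)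
  + \sum_(j < k) ((a, b) == (iS j, iS j))%:R * eps j.

Definition ip (R : realFieldType) k (eps : 'I_k -> R) (x y : vec R k) : R :=
  \sum_(a : idx k) \sum_(b : idx k) x a * y b * gram eps a b.

(* Values of R on 4-tuples of basis vectors: those generated from
   R(U_0,U_i,U_i,S_i) = 1 by the curvature symmetries, all others 0. *)
Definition curvb (R : realFieldType) k (a b c d : idx k) : R :=
  \sum_(j < k)
    let u0 := iU (@ord0 k) in let ui := iU' j in let si := iS j in
    ( ((a, b, c, d) == (u0, ui, ui, si))%:R
    + ((a, b, c, d) == (ui, u0, si, ui))%:R
    + ((a, b, c, d) == (ui, si, u0, ui))%:R
    + ((a, b, c, d) == (si, ui, ui, u0))%:R
    - ((a, b, c, d) == (ui, u0, ui, si))%:R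
    - ((a, b, c, d) == (u0, ui, si, ui))%:R
    - ((a, b, c, d) == (si, ui, u0, ui))%:R
    - ((a, b, c, d) == (ui, si, ui, u0))%:R ).

Definition curv (R : realFieldType) k (x y z w : vec R k) : R :=
  \sum_(a : idx k) \sum_(b : idx k) \sum_(c : idx k) \sum_(d : idx k)
    x a * y b * z c * w d * curvb R a b c d.

Definition AV (R : realFieldType) k (xi : vec R k) : Prop :=
  forall y z w : vec R k, curv xi y z w = 0.

Definition ASV (R : realFieldType) k (eps : 'I_k -> R) (x : vec R k) : Prop :=
  forall xi : vec R k, AV xi -> ip eps x xi = 0.

From HB Require Import structures.
From mathcomp Require Import all_boot all_order all_fingroup all_algebra.
From mathcomp Require Import ring lra.
Set Implicit Arguments. Unset Strict Implicit. Unset Printing Implicit Defensive.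
Import Order.TTheory GRing.Theory Num.Theory.
Local Open Scope ring_scope.

(* In coordinates the curvature tensor is R = sum_j (omega_j (x) theta_j + theta_j (x) omega_j)
   with omega_j = U_0^* /\ U_j^* and theta_j = U_j^* /\ S_j^*, so ker R = span {V_i}.
   An isometry A of the model preserves ker R; since (A S_n, V_i) = (S_n, A^-1 V_i) = 0,
   the vectors A S_n have no U-components, and R(A U_0, ., A U_0, .) = 0 forces
   A U_0 = a_0 U_0 mod ker R with a_0 <> 0.  Writing p_il and d_nl for the U_l-coefficient
   of A U_i and the S_l-coefficient of A S_n, invariance of R and of the inner product give
     a_0 sum_l p_il p_ml d_nl = [m = i][m = n]   and   sum_l d_nl d_ml eps_l = [n = m] eps_n,
   which force p and d to be monomial matrices for one permutation sigma, with
   d_{i,sigma i} = sign a_0 and |a_0| p_{i,sigma i}^2 = 1.  Finally, for n <> m (this is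
   where k >= 2 enters), a_0 R(A S_n, A U_n, A U_n, A U_m) equals the U_0-coefficient
   of A U_m, which therefore vanishes. *)

Section MultipleSums.
Variables (I : finType) (R : realFieldType).

Definition sum2 (F : I -> I -> R) := \sum_a \sum_b F a b.
Definition sum4 (F : I -> I -> I -> I -> R) := \sum_a \sum_b \sum_c \sum_d F a b c d.

Lemma eq_sum2 F G : (forall a b, F a b = G a b) -> sum2 F = sum2 G.
Proof. by move=> FG; apply: eq_bigr => a _; apply: eq_bigr => b _; apply: FG. Qed.

Lemma sum2D F G : sum2 (fun a b => F a b + G a b) = sum2 F + sum2 G.
Proof. by rewrite /sum2 -big_split; apply: eq_bigr => a _; rewrite -big_split. Qed.

Lemma sum2_sum (J : finType) (G : I -> I -> J -> R) :
  sum2 (fun a b => \sum_j G a b j) = \sum_j sum2 (fun a b => G a b j).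
Proof. by rewrite /sum2; under eq_bigr => a _ do rewrite exchange_big; rewrite exchange_big. Qed.

Lemma eq_sum4 F G : (forall a b c d, F a b c d = G a b c d) -> sum4 F = sum4 G.
Proof.
move=> FG; apply: eq_bigr => a _; apply: eq_bigr => b _.
by apply: eq_bigr => c _; apply: eq_bigr => d _; apply: FG.
Qed.

Lemma sum4D F G : sum4 (fun a b c d => F a b c d + G a b c d) = sum4 F + sum4 G.
Proof.
rewrite /sum4 -big_split; apply: eq_bigr => a _; rewrite -big_split.
by apply: eq_bigr => b _; rewrite -big_split; apply: eq_bigr => c _; rewrite -big_split.
Qed.

Lemma sum4_sum (J : finType) (G : I -> I -> I -> I -> J -> R) :
  sum4 (fun a b c d => \sum_j G a b c d j) = \sum_j sum4 (fun a b c d => G a b c d j).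
Proof.
rewrite /sum4.
under eq_bigr => a _ do under eq_bigr => b _ do under eq_bigr => c _ do rewrite exchange_big.
under eq_bigr => a _ do under eq_bigr => b _ do rewrite exchange_big.
by under eq_bigr => a _ do rewrite exchange_big; rewrite exchange_big.
Qed.

Lemma sum4N F : sum4 (fun a b c d => - F a b c d) = - sum4 F.
Proof.
rewrite /sum4 -sumrN; apply: eq_bigr => a _; rewrite -sumrN.
by apply: eq_bigr => b _; rewrite -sumrN; apply: eq_bigr => c _; rewrite -sumrN.
Qed.

Lemma sum2_delta F p q : sum2 (fun a b => F a b * ((a, b) == (p, q))%:R) = F p q.
Proof.
rewrite /sum2 (big_only1 p) // => [|a /negPf ap _]; last first.
  by apply: big1 => b _; rewrite xpair_eqE ap mulr0.
by rewrite (big_only1 q) // ?eqxx ?mulr1 // => b /negPf bq _; rewrite xpair_eqE bq andbF mulr0.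
Qed.

Lemma sum4_delta F p q r s :
  sum4 (fun a b c d => F a b c d * ((a, b, c, d) == (p, q, r, s))%:R) = F p q r s.
Proof.
rewrite /sum4 (big_only1 p) // => [|a /negPf ap _]; last first.
  by do 3![apply: big1 => ? _]; rewrite !xpair_eqE ap mulr0.
rewrite (big_only1 q) // => [|b /negPf bq _]; last first.
  by do 2![apply: big1 => ? _]; rewrite !xpair_eqE bq andbF mulr0.
rewrite (big_only1 r) // => [|c /negPf cr _]; last first.
  by apply: big1 => ? _; rewrite !xpair_eqE cr andbF mulr0.
rewrite (big_only1 s) // ?eqxx ?mulr1 // => d /negPf ds _.
by rewrite !xpair_eqE ds andbF mulr0.
Qed.

(* Rewriting with this before [sum4_delta] keeps the unification in [curv_sum4E] fast;
   rewriting with [sum4N] first does not. *)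
Lemma sum4_deltaN F p q r s :
  sum4 (fun a b c d => - (F a b c d * ((a, b, c, d) == (p, q, r, s))%:R)) = - F p q r s.
Proof. by rewrite sum4N sum4_delta. Qed.

End MultipleSums.

Section Coordinates.
Variables (R : realFieldType) (k : nat).
Implicit Types (x y z w xi : vec R k).

Definition c0 x := x (iU ord0).
Definition cu x (j : 'I_k) := x (iU' j).
Definition cs x (j : 'I_k) := x (iS j).

Definition omega (j : 'I_k) x y := c0 x * cu y j - cu x j * c0 y.
Definition theta (j : 'I_k) x y := cu x j * cs y j - cs x j * cu y j.

Lemma curv_sum4E (x y z w : idx k -> R) :
  sum4 (fun a b c d => x a * y b * z c * w d * curvb R a b c d) =
  \sum_j ((x (iU ord0) * y (iU' j) - x (iU' j) * y (iU ord0))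
          * (z (iU' j) * w (iS j) - z (iS j) * w (iU' j))
        + (z (iU ord0) * w (iU' j) - z (iU' j) * w (iU ord0))
          * (x (iU' j) * y (iS j) - x (iS j) * y (iU' j))).
Proof.
pose u0 := iU (@ord0 k).
pose e (a b c d p q r s : idx k) := x a * y b * z c * w d * ((a, b, c, d) == (p, q, r, s))%:R.
transitivity (sum4 (fun a b c d => \sum_j
  (e a b c d u0 (iU' j) (iU' j) (iS j) + e a b c d (iU' j) u0 (iS j) (iU' j)
 + e a b c d (iU' j) (iS j) u0 (iU' j) + e a b c d (iS j) (iU' j) (iU' j) u0
 - e a b c d (iU' j) u0 (iU' j) (iS j) - e a b c d u0 (iU' j) (iS j) (iU' j)
 - e a b c d (iS j) (iU' j) u0 (iU' j) - e a b c d (iU' j) (iS j) (iU' j) u0))).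
  apply: eq_sum4 => a b c d; rewrite /curvb mulr_sumr; apply: eq_bigr => j _.
  by rewrite /e !mulrBr !mulrDr.
rewrite sum4_sum; apply: eq_bigr => j _.
by rewrite /e !sum4D !sum4_deltaN !sum4_delta /u0; ring.
Qed.

Lemma curvE x y z w :
  curv x y z w = \sum_j (omega j x y * theta j z w + omega j z w * theta j x y).
Proof. exact: curv_sum4E. Qed.

Lemma ipE (eps : 'I_k -> R) x y : ip eps x y =
  \sum_(i < k.+1) (x (iU i) * y (iV i) + x (iV i) * y (iU i))
  + \sum_j x (iS j) * (y (iS j) * eps j).
Proof.
pose e (f g : idx k -> R) (a b p q : idx k) := f a * g b * ((a, b) == (p, q))%:R.
transitivity (sum2 (fun a b =>
     \sum_(i < k.+1) (e x y a b (iU i) (iV i) + e x y a b (iV i) (iU i))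
   + \sum_j e x (fun c => y c * eps j) a b (iS j) (iS j))).
  apply: eq_sum2 => a b; rewrite /gram mulrDr !mulr_sumr /e; congr (_ + _).
    by apply: eq_bigr => i _; rewrite mulrDr.
  by apply: eq_bigr => j _; rewrite mulrA mulrAC -!mulrA.
rewrite sum2D !sum2_sum /e; congr (_ + _).
  by apply: eq_bigr => i _; rewrite sum2D !sum2_delta.
by apply: eq_bigr => j _; rewrite sum2_delta.
Qed.

Definition bV (i : 'I_k.+1) : vec R k := bvec R (iV i).

Lemma bvecE (a b : idx k) : bvec R a b = (b == a)%:R.
Proof. by rewrite ffunE. Qed.

Lemma iU'_inj : injective (@iU' k).
Proof. by move=> i j [] h; apply: val_inj; rewrite !add0n in h. Qed.

Lemma iV_inj : injective (@iV k).
Proof. by move=> i j []. Qed.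

Lemma iS_inj : injective (@iS k).
Proof. by move=> i j []. Qed.

Ltac coord := rewrite /c0 /cu /cs /bU /bU' /bS /bV bvecE /iU' /iU /iV /iS /=.

Lemma c0_bU0 : c0 (bU R ord0) = 1. Proof. by coord. Qed.
Lemma cu_bU0 j : cu (bU R ord0) j = 0. Proof. by coord. Qed.
Lemma cs_bU0 j : cs (bU R ord0) j = 0. Proof. by coord. Qed.
Lemma c0_bU' i : c0 (bU' R i) = 0. Proof. by coord. Qed.
Lemma cu_bU' i j : cu (bU' R i) j = (j == i)%:R.
Proof. by rewrite /cu /bU' bvecE (inj_eq iU'_inj). Qed.
Lemma cs_bU' i j : cs (bU' R i) j = 0. Proof. by coord. Qed.
Lemma c0_bS i : c0 (bS R i) = 0. Proof. by coord. Qed.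
Lemma cu_bS i j : cu (bS R i) j = 0. Proof. by coord. Qed.
Lemma cs_bS i j : cs (bS R i) j = (j == i)%:R. Proof. by rewrite /cs /bS bvecE. Qed.
Lemma c0_bV i : c0 (bV i) = 0. Proof. by coord. Qed.
Lemma cu_bV i j : cu (bV i) j = 0. Proof. by coord. Qed.
Lemma cs_bV i j : cs (bV i) j = 0. Proof. by coord. Qed.

Definition coord_basisE := (c0_bU0, cu_bU0, cs_bU0, c0_bU', cu_bU', cs_bU',
  c0_bS, cu_bS, cs_bS, c0_bV, cu_bV, cs_bV).

Lemma iU_split (P : 'I_k.+1 -> Prop) :
  P ord0 -> (forall j, P (lift ord0 j)) -> forall i, P i.
Proof. by move=> P0 Plift i; case: (unliftP ord0 i) => [j ->|->]. Qed.

Lemma AV_coordsP xi : (0 < k)%N ->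
  AV xi <-> [/\ c0 xi = 0, forall j, cu xi j = 0 & forall j, cs xi j = 0].
Proof.
move=> k_gt0; split=> [xiK | [xi0 xiu xis] y z w]; last first.
  by rewrite curvE big1 // => j _; rewrite /omega /theta xi0 xiu xis; ring.
pose j0 := Ordinal k_gt0.
split=> [|j|j].
- have := xiK (bU' R j0) (bU' R j0) (bS R j0).
  rewrite curvE (big_only1 j0) // => [|l /negPf lj _];
    rewrite /omega /theta !coord_basisE ?eqxx ?lj /=; [lra | ring].
- have := xiK (bU R ord0) (bS R j) (bU' R j).
  rewrite curvE (big_only1 j) // => [|l /negPf lj _];
    rewrite /omega /theta !coord_basisE ?eqxx ?lj /=; [lra | ring].
- have := xiK (bU' R j) (bU' R j) (bU R ord0).
  rewrite curvE (big_only1 j) // => [|l /negPf lj _];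
    rewrite /omega /theta !coord_basisE ?eqxx ?lj /=; [lra | ring].
Qed.

Lemma AV_iU xi : (0 < k)%N -> AV xi -> forall i, xi (iU i) = 0.
Proof. by move=> k_gt0 /(AV_coordsP _ k_gt0) [xi0 xiu _]; apply: iU_split. Qed.

Lemma AV_iS xi : (0 < k)%N -> AV xi -> forall j, xi (iS j) = 0.
Proof. by move=> k_gt0 /(AV_coordsP _ k_gt0) []. Qed.

Lemma AV_bV i : AV (bV i).
Proof. by move=> y z w; rewrite curvE big1 // => j _; rewrite /omega /theta !coord_basisE; ring. Qed.

Lemma ip_supportV (eps : 'I_k -> R) x (v : vec R k) :
    (forall i, v (iU i) = 0) -> (forall j, v (iS j) = 0) ->
  ip eps x v = \sum_i x (iU i) * v (iV i).
Proof.
move=> vU vS; rewrite ipE [X in _ + X]big1 ?addr0 => [|j _]; last by rewrite vS; ring.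
by apply: eq_bigr => i _; rewrite vU mulr0 addr0.
Qed.

Lemma ip_noU (eps : 'I_k -> R) x y :
    (forall i, x (iU i) = 0) -> (forall i, y (iU i) = 0) ->
  ip eps x y = \sum_j x (iS j) * y (iS j) * eps j.
Proof.
move=> xU yU; rewrite ipE big1 ?add0r => [|i _]; last by rewrite xU yU; ring.
by apply: eq_bigr => j _; rewrite mulrA.
Qed.

Lemma ASV_noU (eps : 'I_k -> R) x : (0 < k)%N ->
  c0 x = 0 -> (forall j, cu x j = 0) -> ASV eps x.
Proof.
move=> k_gt0 x0 xu xi xiK; have xU : forall i, x (iU i) = 0 by apply: iU_split.
by rewrite (ip_supportV _ _ (AV_iU k_gt0 xiK) (AV_iS k_gt0 xiK)) big1 // => i _; rewrite xU mul0r.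
Qed.

Lemma c0_subZ x y r : c0 (x - r *: y) = c0 x - r * c0 y. Proof. by rewrite /c0 !ffunE. Qed.
Lemma cu_subZ x y r j : cu (x - r *: y) j = cu x j - r * cu y j. Proof. by rewrite /cu !ffunE. Qed.
Lemma cs_subZ x y r j : cs (x - r *: y) j = cs x j - r * cs y j. Proof. by rewrite /cs !ffunE. Qed.

End Coordinates.

Lemma eps_orthogonal_tr (R : comUnitRingType) n (d : 'I_n -> 'I_n -> R) (eps : 'I_n -> R) :
    (forall j, eps j * eps j = 1) ->
    (forall i m, \sum_l d i l * d m l * eps l = (i == m)%:R * eps i) ->
  forall l l', \sum_i d i l * d i l' * eps i = (l == l')%:R * eps l.
Proof.
move=> eps2 dE l l'.
pose D : 'M[R]_n := \matrix_(l, i) d i l.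
pose M : 'M[R]_n := \matrix_(i, l) (eps i * d i l * eps l).
(* M = E D^T E with E = diag eps is a left, hence a right, inverse of D *)
have MD : M *m D = 1%:M.
  apply/matrixP => i m; rewrite !mxE.
  under eq_bigr => j _ do rewrite !mxE.
  transitivity (eps i * \sum_j d i j * d m j * eps j).
    by rewrite mulr_sumr; apply: eq_bigr => j _; ring.
  by rewrite dE; case: eqVneq => [->|]; rewrite ?mul1r ?eps2 // mul0r mulr0.
have := mulmx1C MD => /matrixP /(_ l l'); rewrite !mxE.
under eq_bigr => j _ do rewrite !mxE.
move=> DM; transitivity ((\sum_j d j l * (eps j * d j l' * eps l')) * eps l').
  by rewrite mulr_suml; apply: eq_bigr => j _; rewrite -[LHS]mulr1 -(eps2 l'); ring.
by rewrite DM; case: eqVneq => [->|]; rewrite ?mul1r ?mul0r.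
Qed.

Section MonomialMatrix.
Variables (R : realFieldType) (k : nat) (eps : 'I_k -> R) (a0 : R) (p d : 'I_k -> 'I_k -> R).
Hypothesis eps_sign : forall j, eps j = 1 \/ eps j = -1.
Hypothesis a0_neq0 : a0 != 0.
Hypothesis d_ortho : forall i m, \sum_l d i l * d m l * eps l = (i == m)%:R * eps i.
Hypothesis pd_cubic :
  forall i m n, \sum_l a0 * (p i l * p m l * d n l) = (m == i)%:R * (m == n)%:R.

Lemma eps_sqr j : eps j * eps j = 1.
Proof. by case: (eps_sign j) => ->; rewrite ?mulrNN mulr1. Qed.

Lemma eps_neq0 j : eps j != 0.
Proof. by case: (eps_sign j) => ->; rewrite ?oppr_eq0 oner_eq0. Qed.

Lemma pp_d i m l : a0 * (p i l * p m l) * eps l = (m == i)%:R * d m l * eps m.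
Proof.
have d_ortho_tr := eps_orthogonal_tr eps_sqr d_ortho.
transitivity (\sum_l' a0 * (p i l' * p m l') * \sum_n d n l' * d n l * eps n).
  by rewrite (big_only1 l) //= => [|l' /negPf l'l _];
    rewrite d_ortho_tr ?eqxx ?mul1r ?l'l ?mul0r ?mulr0.
transitivity (\sum_n (\sum_l' a0 * (p i l' * p m l' * d n l')) * (d n l * eps n)).
  under eq_bigr do rewrite mulr_sumr.
  rewrite exchange_big; apply: eq_bigr => n _; rewrite mulr_suml.
  by apply: eq_bigr => l' _; ring.
under eq_bigr do rewrite pd_cubic.
rewrite (big_only1 m) //= => [|n /negPf nm _]; first by rewrite eqxx mulr1 mulrA.
by rewrite (eq_sym m n) nm mulr0 mul0r.
Qed.

Lemma pp_disjoint i m l : i != m -> p i l * p m l = 0.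
Proof.
move=> im; have := pp_d i m l; rewrite (eq_sym m) (negPf im) !mul0r => /eqP.
by rewrite mulf_eq0 (negPf (eps_neq0 l)) orbF mulf_eq0 (negPf a0_neq0) => /eqP.
Qed.

Lemma row_p_neq0 i : exists l, p i l != 0.
Proof.
apply/existsP; apply: contraT; rewrite negb_exists => /forallP p0.
have d0 l : d i l = 0.
  have := pp_d i i l; rewrite (eqP (negPn (p0 l))) eqxx !(mul0r, mulr0, mul1r) => /esym/eqP.
  by rewrite mulf_eq0 (negPf (eps_neq0 i)) orbF => /eqP.
have := d_ortho i i; rewrite big1 => [|l _]; last by rewrite d0 !mul0r.
by rewrite eqxx mul1r => /esym/eqP; rewrite (negPf (eps_neq0 i)).
Qed.

Definition supp i := odflt i [pick l | p i l != 0].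

Lemma p_supp_neq0 i : p i (supp i) != 0.
Proof.
by rewrite /supp; case: pickP => [//|p0]; have [l] := row_p_neq0 i; rewrite p0.
Qed.

Lemma supp_inj : injective supp.
Proof.
move=> i m e; apply/eqP; apply: contraT => im.
have := pp_disjoint (supp i) im; rewrite {2}e => /eqP.
by rewrite mulf_eq0 (negPf (p_supp_neq0 i)) (negPf (p_supp_neq0 m)).
Qed.

Definition sigma := perm supp_inj.

Lemma p_off i l : l != sigma i -> p i l = 0.
Proof.
move=> l_off; pose m := (sigma^-1)%g l.
have lm : l = sigma m by rewrite /m permKV.
have im : i != m by apply: contraNneq l_off => ->; rewrite -lm.
have := pp_disjoint l im; rewrite {2}lm permE => /eqP.
by rewrite mulf_eq0 (negPf (p_supp_neq0 _)) orbF => /eqP.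
Qed.

Lemma d_off i l : l != sigma i -> d i l = 0.
Proof.
move=> l_off; have := pp_d i i l; rewrite p_off // mul0r mulr0 mul0r eqxx mul1r => /esym/eqP.
by rewrite mulf_eq0 (negPf (eps_neq0 i)) orbF => /eqP.
Qed.

Lemma d_diag_sqr i : d i (sigma i) * d i (sigma i) * eps (sigma i) = eps i.
Proof.
have := d_ortho i i; rewrite eqxx mul1r (big_only1 (sigma i)) // => l l_off _.
by rewrite d_off // !mul0r.
Qed.

Lemma d_diag_norm i :
  d i (sigma i) = Num.sg a0 /\ `|a0| * p i (sigma i) ^+ 2 = 1.
Proof.
set mu := p i (sigma i); set lam := d i (sigma i).
have mu2_gt0 : 0 < mu * mu.
  by rewrite lt_def mulf_neq0 /mu ?permE ?p_supp_neq0 //= -expr2 sqr_ge0.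
have [lam2 a0mu2] : lam * lam = 1 /\ a0 * (mu * mu) = lam.
  have := d_diag_sqr i; have := pp_d i i (sigma i); rewrite eqxx mul1r -/mu -/lam.
  by case: (eps_sign i) => ->; case: (eps_sign (sigma i)) => -> h1 h2; split; nra.
have /eqP : (lam - 1) * (lam + 1) = 0 by rewrite mulrDr !mulrBl lam2; ring.
rewrite mulf_eq0 subr_eq0 addr_eq0 => /orP[] /eqP lamE.
- have a0_gt0 : 0 < a0 by rewrite -(pmulr_lgt0 _ mu2_gt0) a0mu2 lamE ltr01.
  by rewrite gtr0_sg // gtr0_norm // expr2 a0mu2.
- have a0_lt0 : a0 < 0 by rewrite -(pmulr_llt0 _ mu2_gt0) a0mu2 lamE ltrN10.
  by rewrite ltr0_sg // ltr0_norm // expr2 mulNr a0mu2 lamE opprK.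
Qed.

Lemma monomial_structure : exists sigma : {perm 'I_k},
  [/\ forall i l, l != sigma i -> p i l = 0,
      forall i l, l != sigma i -> d i l = 0
    & forall i, d i (sigma i) = Num.sg a0 /\ `|a0| * p i (sigma i) ^+ 2 = 1].
Proof. by exists sigma; split; [exact: p_off | exact: d_off | exact: d_diag_norm]. Qed.

End MonomialMatrix.

Section Isometry.
Variables (R : realFieldType) (k : nat) (eps : 'I_k -> R) (A : {linear vec R k -> vec R k}).
Hypothesis k_gt0 : (0 < k)%N.
Hypothesis A_bij : bijective A.
Hypothesis A_ip : forall x y, ip eps (A x) (A y) = ip eps x y.
Hypothesis A_curv : forall x y z w, curv (A x) (A y) (A z) (A w) = curv x y z w.

Local Notation a := (A (bU R ord0)).
Local Notation pU i l := (cu (A (bU' R i)) l).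
Local Notation dS n l := (cs (A (bS R n)) l).

Lemma AV_isoE xi : AV (A xi) <-> AV xi.
Proof.
have [g _ Kg] := A_bij.
by split=> xiK y z w; [rewrite -A_curv | rewrite -[y]Kg -[z]Kg -[w]Kg A_curv].
Qed.

Lemma iso_bS_iU n i : A (bS R n) (iU i) = 0.
Proof.
have [g _ Kg] := A_bij.
have gV : AV (g (bV R i)) by apply/AV_isoE; rewrite Kg; apply: AV_bV.
have := A_ip (bS R n) (g (bV R i)); rewrite Kg.
rewrite (ip_supportV _ _ (AV_iU k_gt0 gV) (AV_iS k_gt0 gV)) ip_supportV => [|j|j];
  rewrite ?bvecE //.
rewrite [X in _ = X -> _]big1 => [|j _]; last by rewrite bvecE mul0r.
rewrite (big_only1 i) // => [|j /negPf ji _]; last by rewrite bvecE (inj_eq (@iV_inj _)) ji mulr0.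
by rewrite bvecE eqxx mulr1.
Qed.

Lemma c0_iso_bS n : c0 (A (bS R n)) = 0. Proof. exact: iso_bS_iU. Qed.
Lemma cu_iso_bS n l : cu (A (bS R n)) l = 0. Proof. exact: iso_bS_iU. Qed.

Lemma curv_iso_U0 y w : curv a y a w = 0.
Proof.
have [g _ Kg] := A_bij.
rewrite -[y]Kg -[w]Kg A_curv curvE big1 // => j _.
by rewrite /omega /theta !coord_basisE; ring.
Qed.

Lemma cu_iso_U0 j : cu a j = 0.
Proof.
have := curv_iso_U0 (bU R ord0) (bS R j).
rewrite curvE (big_only1 j) // => [|l /negPf lj _];
  rewrite /omega /theta !coord_basisE ?eqxx ?lj /=; last by ring.
move=> e; have /eqP : cu a j * cu a j = 0 by lra.
by rewrite mulf_eq0 orbb => /eqP.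
Qed.

Lemma c0_cs_iso_U0 j : c0 a * cs a j = 0.
Proof.
have := curv_iso_U0 (bU' R j) (bU' R j).
rewrite curvE (big_only1 j) // => [|l /negPf lj _];
  rewrite /omega /theta !coord_basisE ?eqxx ?lj /=; [lra | ring].
Qed.

Lemma c0_iso_U0_dual : c0 a * A (bV R ord0) (iV ord0) = 1.
Proof.
have AV0 : AV (A (bV R ord0)) by apply/AV_isoE; apply: AV_bV.
have := A_ip (bU R ord0) (bV R ord0).
rewrite (ip_supportV _ _ (AV_iU k_gt0 AV0) (AV_iS k_gt0 AV0)) ip_supportV => [|j|j];
  rewrite ?bvecE // !big_ord_recl !big1 ?addr0 => [|j _|j _].
- by move=> ->; rewrite !bvecE !eqxx; apply: mulr1.
- by have := cu_bU0 R j; rewrite /cu /iU' => ->; rewrite mul0r.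
- by have := cu_iso_U0 j; rewrite /cu /iU' => ->; rewrite mul0r.
Qed.

Lemma c0_iso_U0_neq0 : c0 a != 0.
Proof.
by apply/eqP => a0; have /eqP := c0_iso_U0_dual; rewrite a0 mul0r eq_sym oner_eq0.
Qed.

Lemma cs_iso_U0 j : cs a j = 0.
Proof. by have /eqP := c0_cs_iso_U0 j; rewrite mulf_eq0 (negPf c0_iso_U0_neq0) => /eqP. Qed.

Lemma iso_cubic i m n :
  \sum_l c0 a * (pU i l * pU m l * dS n l) = (m == i)%:R * (m == n)%:R.
Proof.
have := A_curv (bS R n) (bU' R i) (bU R ord0) (bU' R m).
rewrite !curvE [X in _ = X -> _](big_only1 m) // => [|l /negPf lm _]; last first.
  by rewrite /omega /theta !coord_basisE lm /=; ring.
rewrite (eq_bigr (fun l => - (c0 a * (pU i l * pU m l * dS n l)))) => [|l _]; last first.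
  by rewrite /omega /theta c0_iso_bS cu_iso_bS cu_iso_U0 cs_iso_U0; ring.
rewrite sumrN /omega /theta !coord_basisE eqxx /= => e.
by rewrite -[LHS]opprK e; ring.
Qed.

Lemma iso_S_ortho n m : \sum_l dS n l * dS m l * eps l = (n == m)%:R * eps n.
Proof.
have := A_ip (bS R n) (bS R m).
rewrite !ip_noU => [e|i|i|i|i]; rewrite ?iso_bS_iU ?bvecE //.
rewrite [LHS]e (big_only1 n) // => [|l /negPf ln _]; first by rewrite !bvecE eqxx mul1r.
by rewrite !bvecE (inj_eq (@iS_inj _)) ln !mul0r.
Qed.

Lemma c0_iso_U' : (1 < k)%N -> forall m, c0 (A (bU' R m)) = 0.
Proof.
(* a_0 R(A S_n, A U_n, A U_n, A U_m) is the U_0-coefficient of A U_m, by [iso_cubic] *)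
move=> k_gt1 m.
have [n nm] : exists n, n != m.
  have [->|m_neq] := eqVneq m (Ordinal k_gt0); first by exists (Ordinal k_gt1).
  by exists (Ordinal k_gt0); rewrite eq_sym.
have := A_curv (bS R n) (bU' R n) (bU' R n) (bU' R m).
rewrite [X in _ = X -> _]curvE big1 => [|l _]; last first.
  by rewrite /omega /theta !coord_basisE; ring.
rewrite curvE => /(congr1 ( *%R (c0 a))); rewrite mulr0 mulr_sumr.
rewrite (eq_bigr (fun l => c0 (A (bU' R m)) * (c0 a * (pU n l * pU n l * dS n l))
    - c0 (A (bU' R n)) * (c0 a * (pU n l * pU m l * dS n l)))) => [|l _]; last first.
  by rewrite /omega /theta c0_iso_bS cu_iso_bS; ring.
rewrite sumrB -(mulr_sumr _ _ _ (c0 (A (bU' R m)))) -(mulr_sumr _ _ _ (c0 (A (bU' R n)))).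
by rewrite !iso_cubic (eq_sym m n) (negPf nm) eqxx /= => <-; ring.
Qed.

End Isometry.

Theorem theorem1p5 (R : realFieldType) (k : nat) (eps : 'I_k -> R)
    (heps : forall j, eps j = 1 \/ eps j = -1)
    (hk : (2 <= k)%N)
    (A : {linear vec R k -> vec R k})
    (hAbij : bijective A)
    (hAip : forall x y, ip eps (A x) (A y) = ip eps x y)
    (hAR : forall x y z w, curv (A x) (A y) (A z) (A w) = curv x y z w) :
  exists (sigma : {perm 'I_k}) (a0 : R) (b : 'I_k -> R),
    (forall j, `|a0| * b j ^+ 2 = 1) /\
    AV (A (bU R (@ord0 k)) - a0 *: bU R (@ord0 k)) /\
    (forall j, ASV eps (A (bU' R j) - b j *: bU' R (sigma j))) /\
    (forall j, AV (A (bS R j) - Num.sg a0 *: bS R (sigma j))).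
Proof.
have k_gt0 : (0 < k)%N := ltnW hk.
have [sigma [pU_off dS_off dS_diag]] := monomial_structure heps
  (c0_iso_U0_neq0 k_gt0 hAbij hAip hAR) (iso_S_ortho k_gt0 hAbij hAip hAR)
  (iso_cubic k_gt0 hAbij hAip hAR).
have [AU0_u AU0_s] := (cu_iso_U0 hAbij hAR, cs_iso_U0 k_gt0 hAbij hAip hAR).
have [AS_0 AS_u] := (c0_iso_bS k_gt0 hAbij hAip hAR, cu_iso_bS k_gt0 hAbij hAip hAR).
have AU'_0 := c0_iso_U' k_gt0 hAbij hAip hAR hk.
exists sigma, (c0 (A (bU R ord0))), (fun j => cu (A (bU' R j)) (sigma j)).
split; [|split; [|split]].
- by move=> j; case: (dS_diag j).
- apply/(AV_coordsP _ k_gt0); split=> [|j|j];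
    rewrite ?c0_subZ ?cu_subZ ?cs_subZ !coord_basisE ?AU0_u ?AU0_s; ring.
- move=> j; apply: ASV_noU k_gt0 _ _ => [|l]; rewrite ?c0_subZ ?cu_subZ !coord_basisE.
    by rewrite AU'_0; ring.
  by have [->|/pU_off->] := eqVneq l (sigma j); rewrite ?eqxx /=; ring.
- move=> j; apply/(AV_coordsP _ k_gt0); split=> [|l|l];
    rewrite ?c0_subZ ?cu_subZ ?cs_subZ !coord_basisE ?AS_0 ?AS_u; [ring | ring |].
  have [->|/dS_off->] := eqVneq l (sigma j); rewrite ?eqxx /=; last by ring.
  by case: (dS_diag j) => -> _; ring.
Qed.
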